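(* Let $n\ge1$ be an integer and let $A_{ij}$ be the coefficient of $u^iv^jw^{n+1-i-j}$ in $P_{1/(n+1)}(u,v,w)$ (equivalently, of $x^{2i}y^{2j}z^{2(n+1-i-j)}$ in the numerator of $M_{1/(n+1)}$). Then for all integers $i,j\ge0$ with $i+j\le n+1$ and $j\le n$, $$A_{ij}=\binom{n-j}{n+1-i-j}\binom{i+j}{j},$$ with the convention $\binom{m}{k}=0$ unless $0\le k\le m$; moreover $A_{0,n+1}=1$ and $A_{i,n+1}=0$ for $i>0$.
   Context: Markov polynomials. Let $x,y,z$ be indeterminates. Consider the set consisting of all rationals $\rho\in[0,1]$, each written in lowest terms $\rho=a/b$ with integers $a\ge 0$, $b\ge 1$, together with the formal symbol $1/0$. Define Laurent polynomials $M_\rho(x,y,z)$ recursively by $M_{1/0}=y$, $M_{0/1}=x$, $M_{1/1}=\frac{x^2+y^2}{z}$, and: whenever $a/b$, $c/d$ are in this set with $|ad-bc|=1$ and $(a+2c)/(b+2d)\in[0,1]$, then $M_{\frac{a+2c}{b+2d}}=\big(M_{c/d}^2+M_{\frac{a+c}{b+d}}^2\big)/M_{a/b}$. This determines $M_\rho$ for every rational $\rho\in[0,1]$. In particular $M_{1/(k+1)}=(M_{1/k}^2+x^2)/M_{1/(k-1)}$ for $k\ge1$. Numerator. For coprime $1\le a\le b$, $P_{a/b}(u,v,w)$ denotes the homogeneous polynomial of degree $a+b-1$ such that $M_{a/b}(x,y,z)=P_{a/b}(x^2,y^2,z^2)/(x^{a-1}y^{b-1}z^{a+b-1})$; its existence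 is known. *)

From HB Require Import structures.
From mathcomp Require Import all_boot all_order all_algebra.
From mathcomp Require Import mpoly fraction.
Set Implicit Arguments.
Unset Strict Implicit.
Unset Printing Implicit Defensive.
Import Order.TTheory GRing.Theory.
Local Open Scope ring_scope.

Notation Poly3 := {mpoly rat[3]}.
(* The field of rational functions Q(x,y,z); Laurent polynomials live in it. *)
Notation RatFun3 := {fraction Poly3}.

Definition xP : Poly3 := 'X_(0 : 'I_3).
Definition yP : Poly3 := 'X_(1 : 'I_3).
Definition zP : Poly3 := 'X_(2 : 'I_3).

Definition xF : RatFun3 := tofrac xP.
Definition yF : RatFun3 := tofrac yP.
Definition zF : RatFun3 := tofrac zP.

(* Markov_one k = M_{1/k}(x,y,z), defined by M_{1/0} = y,
   M_{1/1} = (x^2+y^2)/z and M_{1/(k+1)} = (M_{1/k}^2 + x^2)/M_{1/(k-1)}. *)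
Fixpoint Markov_one_pair (k : nat) : RatFun3 * RatFun3 :=
  match k with
  | 0 => (yF, (xF ^+ 2 + yF ^+ 2) / zF)
  | k'.+1 => let (a, b) := Markov_one_pair k' in (b, (b ^+ 2 + xF ^+ 2) / a)
  end.

Definition Markov_one (k : nat) : RatFun3 := (Markov_one_pair k).1.

(* P is the numerator of M_{1/b}:  P homogeneous of degree 1 + b - 1 = b and
   M_{1/b}(x,y,z) = P(x^2,y^2,z^2) / (x^0 y^(b-1) z^(1+b-1)). *)
Definition is_numerator_one (b : nat) (P : Poly3) : Prop :=
  P \is b.-homog /\
  Markov_one b =
    tofrac (P \mPo [tuple xP ^+ 2; yP ^+ 2; zP ^+ 2])
      / tofrac (yP ^+ b.-1 * zP ^+ b).

Definition mono3 (i j k : nat) : 'X_{1..3} := [multinom of [:: i; j; k]].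

(* The numerators satisfy the three-term recurrence
   P_{k+2} = (u + v + w) P_{k+1} - v w P_k,  P_0 = 1,  P_1 = u + v.
   Indeed, the rescaled sequence L_k = P_k(x^2, y^2, z^2) y / (y z)^k satisfies
   L_{k+2} = c L_{k+1} - L_k with c = (x^2 + y^2 + z^2) / (y z), so its Casorati
   determinant L_{k+2} L_k - L_{k+1}^2 is constant; it equals x^2, which is the
   Markov recursion, whence L_k = M_{1/k}.  Comparing coefficients of u^i v^j w^l
   in the three-term recurrence gives a Pascal-type recurrence, which the
   products of binomials C(i + l - 1, l) C(i + j, j) also satisfy. *)

From HB Require Import structures.
From mathcomp Require Import all_boot all_order all_algebra.
From mathcomp Require Import mpoly fraction.
From mathcomp Require Import zify ring lra.

Set Implicit Arguments.
Unset Strict Implicit.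
Unset Printing Implicit Defensive.
Import GRing.Theory.

(* For i = l = 0 the truncated predecessor makes the first factor 'C(0, 0) = 1. *)
Definition markov_coef (k i j l : nat) : nat :=
  if i + j + l == k then 'C((i + l).-1, l) * 'C(i + j, j) else 0.

Lemma markov_coef_rec k i j l :
  markov_coef k.+2 i j l
     + (if 0 < j then if 0 < l then markov_coef k i j.-1 l.-1 else 0 else 0)
   = (if 0 < i then markov_coef k.+1 i.-1 j l else 0)
     + (if 0 < j then markov_coef k.+1 i j.-1 l else 0)
     + (if 0 < l then markov_coef k.+1 i j l.-1 else 0).
Proof.
rewrite /markov_coef.
case: i => [|i]; case: j => [|j]; case: l => [|l] /=;
  rewrite ?addn0 ?add0n ?addSn ?addnS ?eqSS ?subn1 /=; try (case: eqP => // E).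
all: rewrite ?bin0 ?binn ?muln1 ?mul1n //.
all: try (rewrite !binS; ring).
by move: E; case: l => [|l] //= _; rewrite !bin_small.
Qed.

Local Open Scope ring_scope.

Lemma linrec_casorati (R : comNzRingType) (a : nat -> R) (s t : R) :
  (forall k, a k.+2 = s * a k.+1 - t * a k) ->
  forall k, a k.+2 * a k - a k.+1 ^+ 2 = t ^+ k * (a 2%N * a 0%N - a 1%N ^+ 2).
Proof.
move=> rec; elim=> [|k IH]; first by rewrite expr0 mul1r.
by rewrite [t ^+ _]exprS -mulrA -IH (rec k.+1) (rec k); ring.
Qed.

Lemma mcoeffMXU (n : nat) (R : nzRingType) (p : {mpoly R[n]}) (i : 'I_n) m :
  (p * 'X_i)@_m = if (0 < m i)%N then p@_(m - U_(i))%MM else 0.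
Proof.
case: ifP => [m_i_gt0 | /negbT].
- have -> : m = (U_(i) + (m - U_(i)))%MM.
    by apply/mnmP => j; rewrite mnmDE mnmBE mnm1E; case: eqP => [<-|_]; lia.
  by rewrite mcoeffMX addmC addmK.
rewrite -leqNgt leqn0 => /eqP m_i0; apply: memN_msupp_eq0.
rewrite (perm_mem (msuppMX p U_(i))); apply/mapP => -[m' _ mE].
by move: m_i0; rewrite mE mnmDE mnm1E eqxx.
Qed.

Lemma mnm3_eq (m m' : 'X_{1..3}) :
  (m == m') = [&& m 0 == m' 0, m 1 == m' 1 & m 2 == m' 2].
Proof.
apply/eqP/and3P => [-> //| [/eqP e0 /eqP e1 /eqP e2]].
apply/mnmP => -[[|[|[|i]]] Hi] //.
- by rewrite (_ : Ordinal Hi = 0) //; apply: val_inj.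
- by rewrite (_ : Ordinal Hi = 1) //; apply: val_inj.
- by rewrite (_ : Ordinal Hi = 2) //; apply: val_inj.
Qed.

Fixpoint markov_num (k : nat) : Poly3 :=
  match k with
  | 0 => 1
  | k1.+1 => match k1 with
             | 0 => xP + yP
             | k0.+1 => (xP + yP + zP) * markov_num k1 - yP * zP * markov_num k0
             end
  end.

Arguments markov_num : simpl never.

Lemma markov_numSS k :
  markov_num k.+2 = (xP + yP + zP) * markov_num k.+1 - yP * zP * markov_num k.
Proof. by []. Qed.

Lemma mcoeff_markov_num k m :
  (markov_num k)@_m = (markov_coef k (m 0) (m 1) (m 2))%:R.
Proof.
elim/ltn_ind: k m => -[|[|k]] IH m.
- rewrite mcoeff1 mnm3_eq !mnm0E /markov_coef.
  by case: (m 0) (m 1) (m 2) => [|?] [|?] [|?]; rewrite ?addnS.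
- rewrite mcoeffD !mcoeffX !mnm3_eq !mnm1E /= /markov_coef.
  by case: (m 0) (m 1) (m 2) => [|[|?]] [|[|?]] [|[|?]]; rewrite ?addnS ?addSn.
have -> : markov_num k.+2 = markov_num k.+1 * xP + markov_num k.+1 * yP
    + markov_num k.+1 * zP - markov_num k * zP * yP.
  by rewrite markov_numSS; ring.
rewrite mcoeffB !mcoeffD !mcoeffMXU !IH // !mnmBE !mnm1E /= !subn0 !subn1.
have := markov_coef_rec k (m 0) (m 1) (m 2).
move: (m 0) (m 1) (m 2) => i j l /(congr1 (fun n => n%:R : rat)).
rewrite !natrD.
by case: (0 < i)%N; case: (0 < j)%N; case: (0 < l)%N => /= rec; lra.
Qed.

Lemma mcoeff_markov_num_mono3 k i j l :
  (markov_num k)@_(mono3 i j l) = (markov_coef k i j l)%:R.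
Proof. exact: mcoeff_markov_num. Qed.

Lemma comp_mpoly_sqX (n : nat) (R : comNzRingType) (m : 'X_{1..n}) :
  'X_[m] \mPo [tuple ('X_i : {mpoly R[n]}) ^+ 2 | i < n] = 'X_[m + m].
Proof.
rewrite comp_mpolyX mpolyXE_id; apply: eq_bigr => i _.
by rewrite tnth_mktuple mnmDE -exprM mul2n addnn.
Qed.

Lemma mcoeff_comp_sq (n : nat) (R : comNzRingType) (p : {mpoly R[n]}) m :
  (p \mPo [tuple 'X_i ^+ 2 | i < n])@_(m + m) = p@_m.
Proof.
have double_eq (m1 m2 : 'X_{1..n}) : ((m1 + m1)%MM == (m2 + m2)%MM) = (m1 == m2).
  apply/eqP/eqP => [/mnmP e | -> //]; apply/mnmP => i.
  by have := e i; rewrite !mnmDE; lia.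
rewrite comp_mpolyEX [in RHS](mpolyE p) !raddf_sum /=; apply: eq_bigr => m' _.
by rewrite !mcoeffZ comp_mpoly_sqX !mcoeffX double_eq.
Qed.

Lemma comp_mpoly_sq_inj (n : nat) (R : comNzRingType) :
  injective (comp_mpoly [tuple ('X_i : {mpoly R[n]}) ^+ 2 | i < n]).
Proof.
by move=> p q pq; apply/mpolyP => m; rewrite -!(mcoeff_comp_sq _ m) /= pq.
Qed.

Notation sq3 := [tuple ('X_i : Poly3) ^+ 2 | i < 3].

Lemma comp_sq3_markov_numSS k : markov_num k.+2 \mPo sq3 =
  (xP ^+ 2 + yP ^+ 2 + zP ^+ 2) * (markov_num k.+1 \mPo sq3)
  - (yP * zP) ^+ 2 * (markov_num k \mPo sq3).
Proof.
rewrite markov_numSS; move: (markov_num k.+1) (markov_num k) => p q.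
rewrite !(rmorphB, rmorphM, rmorphD) /= !comp_mpolyXU.
by rewrite -!tnth_nth !tnth_mktuple exprMn.
Qed.

Definition markov_num_sq k : RatFun3 := tofrac (markov_num k \mPo sq3).

Lemma markov_num_sq0 : markov_num_sq 0 = 1.
Proof. by rewrite /markov_num_sq comp_mpoly1 rmorph1. Qed.

Lemma markov_num_sq1 : markov_num_sq 1 = xF ^+ 2 + yF ^+ 2.
Proof.
rewrite /markov_num_sq rmorphD /= !comp_mpolyXU.
by rewrite -!tnth_nth !tnth_mktuple rmorphD !rmorphXn.
Qed.

Lemma markov_num_sqSS k : markov_num_sq k.+2 =
  (xF ^+ 2 + yF ^+ 2 + zF ^+ 2) * markov_num_sq k.+1
  - (yF * zF) ^+ 2 * markov_num_sq k.
Proof.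
rewrite /markov_num_sq comp_sq3_markov_numSS.
by rewrite !(rmorphB, rmorphM, rmorphD, rmorphXn).
Qed.

Lemma markov_num_sq_neq0 k : markov_num_sq k != 0.
Proof.
rewrite tofrac_eq0; apply/eqP => /(congr1 (mcoeff (mono3 k 0 0 + mono3 k 0 0))).
rewrite mcoeff_comp_sq mcoeff_markov_num_mono3 mcoeff0 /markov_coef !addn0 eqxx.
by rewrite !bin0 => /eqP; rewrite oner_eq0.
Qed.

Lemma tofrac_X_neq0 (i : 'I_3) : tofrac ('X_i : Poly3) != 0.
Proof.
rewrite tofrac_eq0; apply/eqP => /(congr1 (mcoeff U_(i))).
by rewrite mcoeffXU eqxx mcoeff0 => /eqP; rewrite oner_eq0.
Qed.

Section Laurent.

Variables (F : fieldType) (x y z : F) (s : nat -> F).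
Hypotheses (y_neq0 : y != 0) (z_neq0 : z != 0).
Hypotheses (s0 : s 0 = 1) (s1 : s 1 = x ^+ 2 + y ^+ 2).
Hypothesis sSS :
  forall k, s k.+2 = (x ^+ 2 + y ^+ 2 + z ^+ 2) * s k.+1 - (y * z) ^+ 2 * s k.

Definition laurent k := s k * y / (y * z) ^+ k.

Lemma laurent0 : laurent 0 = y.
Proof. by rewrite /laurent s0 expr0 divr1 mul1r. Qed.

Lemma laurent1 : laurent 1 = (x ^+ 2 + y ^+ 2) / z.
Proof. by rewrite /laurent s1 expr1; field; rewrite y_neq0 z_neq0. Qed.

Lemma laurentS k : laurent k.+1 = s k.+1 / (y ^+ k * z ^+ k.+1).
Proof.
rewrite /laurent exprMn !exprS.
have [yk_neq0 zk_neq0] : y ^+ k != 0 /\ z ^+ k != 0 by rewrite !expf_neq0.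
move: (y ^+ k) (z ^+ k) yk_neq0 zk_neq0 => yk zk yk_neq0 zk_neq0.
by field; rewrite yk_neq0 zk_neq0 y_neq0 z_neq0.
Qed.

Lemma laurentSS k :
  laurent k.+2 = (x ^+ 2 + y ^+ 2 + z ^+ 2) / (y * z) * laurent k.+1 - laurent k.
Proof.
rewrite /laurent sSS !exprS.
have : (y * z) ^+ k != 0 by rewrite expf_neq0 // mulf_neq0.
move: ((y * z) ^+ k) => d d_neq0.
by field; rewrite d_neq0 y_neq0 z_neq0.
Qed.

Lemma laurent_markov k : laurent k.+2 * laurent k = laurent k.+1 ^+ 2 + x ^+ 2.
Proof.
apply/eqP; rewrite addrC -subr_eq; apply/eqP.
have rec j : laurent j.+2 = (x ^+ 2 + y ^+ 2 + z ^+ 2) / (y * z) * laurent j.+1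
                         - 1 * laurent j by rewrite mul1r laurentSS.
rewrite (linrec_casorati rec) expr1n mul1r laurentSS laurent0 laurent1.
by field; rewrite z_neq0.
Qed.

End Laurent.

Lemma yF_neq0 : yF != 0. Proof. exact: tofrac_X_neq0. Qed.
Lemma zF_neq0 : zF != 0. Proof. exact: tofrac_X_neq0. Qed.

Definition markov_laurent k : RatFun3 := laurent yF zF markov_num_sq k.

Lemma markov_laurent_neq0 k : markov_laurent k != 0.
Proof.
exact: mulf_neq0 (mulf_neq0 (markov_num_sq_neq0 k) yF_neq0)
  (invr_neq0 (expf_neq0 k (mulf_neq0 yF_neq0 zF_neq0))).
Qed.

Lemma Markov_one_pairE k :
  Markov_one_pair k = (markov_laurent k, markov_laurent k.+1).
Proof.
elim: k => [|k IH].
  rewrite /markov_laurent (laurent0 yF zF markov_num_sq0).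
  by rewrite (laurent1 yF_neq0 zF_neq0 markov_num_sq1).
change (Markov_one_pair k.+1) with
  (let (a, b) := Markov_one_pair k in (b, (b ^+ 2 + xF ^+ 2) / a)).
rewrite IH; congr pair.
have markov := laurent_markov yF_neq0 zF_neq0 markov_num_sq0 markov_num_sq1
  markov_num_sqSS.
by rewrite -markov mulfK ?markov_laurent_neq0.
Qed.

Lemma Markov_oneE k : Markov_one k = markov_laurent k.
Proof. by rewrite /Markov_one Markov_one_pairE. Qed.

Lemma is_numerator_one_markov_num k P :
  is_numerator_one k.+1 P -> P = markov_num k.+1.
Proof.
move=> [_ PE]; apply: (@comp_mpoly_sq_inj 3 rat); apply/eqP.
rewrite -tofrac_eq -/(markov_num_sq k.+1); apply/eqP.
have sq3E : [tuple xP ^+ 2; yP ^+ 2; zP ^+ 2] = sq3.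
  by apply: eq_from_tnth => -[[|[|[|]]] ?] //; rewrite tnth_mktuple.
have den_neq0 : (yF ^+ k * zF ^+ k.+1)^-1 != 0.
  exact: invr_neq0 (mulf_neq0 (expf_neq0 k yF_neq0) (expf_neq0 k.+1 zF_neq0)).
apply: (mulIf den_neq0).
rewrite -(laurentS _ yF_neq0 zF_neq0) -/(markov_laurent k.+1) -Markov_oneE PE sq3E.
by rewrite rmorphM !rmorphXn.
Qed.

Theorem theorem5p2 (n : nat) (P : {mpoly rat[3]}) :
  (1 <= n)%N ->
  is_numerator_one n.+1 P ->
  let A := fun i j : nat => P@_(mono3 i j (n.+1 - i - j)) in
  (forall i j : nat, (i + j <= n.+1)%N -> (j <= n)%N ->
     A i j = ('C(n - j, n.+1 - i - j) * 'C(i + j, j))%:R) /\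
  A 0%N n.+1 = 1 /\
  (forall i : nat, (0 < i)%N -> A i n.+1 = 0).
Proof.
move=> _ /is_numerator_one_markov_num -> A.
rewrite /A; split; [|split] => [i j ij_le j_le | | i i_gt0];
  rewrite mcoeff_markov_num_mono3 /markov_coef.
- have -> : (i + j + (n.+1 - i - j) == n.+1)%N by apply/eqP; lia.
  by have -> : ((i + (n.+1 - i - j)).-1 = n - j)%N by lia.
- by rewrite subn0 subnn addn0 eqxx bin0 binn.
- by have -> : (i + n.+1 + (n.+1 - i - n.+1) == n.+1)%N = false by apply/eqP; lia.
Qed.
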